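(* The topes of any $(n,d)$-pre-trianguloid are pairwise compatible. Consequently, a collection of topes $\{T_v\}$ indexed by the lattice points $v$ of $n\Delta^{d-1}$ is a pre-trianguloid if and only if it is an extended $(n,d)$-tope arrangement.
   Context: Fix positive integers $n,d$; graphs are subgraphs of the complete bipartite graph with left vertices $[n]$ and right vertices $[\bar d]=\{\bar1,\dots,\bar d\}$. $RD(G)$ is the vector of right-vertex degrees; lattice points of $n\Delta^{d-1}$ are vectors in $\mathbb Z_{\ge0}^{[\bar d]}$ with sum $n$; $e_{\bar j}$ is a unit vector. Two acyclic graphs are compatible if whenever both contain a perfect matching between the same $I\subseteq[n]$, $\bar J\subseteq[\bar d]$, these matchings coincide. A tope is a map $T:[n]\to[\bar d]$ (graph $\{(i,T(i))\}$). An extended $(n,d)$-tope arrangement is a collection of pairwise compatible topes $T_v$, one for each lattice point $v$ of $n\Delta^{d-1}$, with $RD(T_v)=v$. An $(n,d)$-pre-trianguloid is a collection of topes $T_v$, one for each lattice point $v$ of $n\Delta^{d-1}$, with $RD(T_v)=v$, such that whenever $v-e_{\bar j}=v'-e_{\bar j'}$ for lattice points $v,v'$ and $\bar j,\bar j'\in[\bar d]$, we have $T_{v'}^{-1}(\bar j)\subseteq T_v^{-1}(\bar j)$. *)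

From mathcomp Require Import all_boot.
Set Implicit Arguments. Unset Strict Implicit. Unset Printing Implicit Defensive.

(* Left vertices [n] = 'I_n, right vertices [\bar d] = 'I_d.
   A graph is a subgraph of K_{n,d}: a set of edges (i, \bar j). *)
Definition graph (n d : nat) := {set 'I_n * 'I_d}.

Definition perfect_matching n d (M : graph n d) (I : {set 'I_n}) (J : {set 'I_d}) : Prop :=
  (forall e, e \in M -> (e.1 \in I) && (e.2 \in J)) /\
  (forall i, i \in I -> #|[set j | (i, j) \in M]| = 1) /\
  (forall j, j \in J -> #|[set i | (i, j) \in M]| = 1).

Definition compatible n d (G1 G2 : graph n d) : Prop :=
  forall (I : {set 'I_n}) (J : {set 'I_d}) (M1 M2 : graph n d),
    M1 \subset G1 -> M2 \subset G2 ->
    perfect_matching M1 I J -> perfect_matching M2 I J -> M1 = M2.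

Definition tope (n d : nat) := {ffun 'I_n -> 'I_d}.
Definition tope_graph n d (T : tope n d) : graph n d := [set (i, T i) | i : 'I_n].

Definition RD n d (T : tope n d) : {ffun 'I_d -> nat} :=
  [ffun j => #|[set i | T i == j]|].

Definition lattice_point (n d : nat) (v : {ffun 'I_d -> nat}) : Prop :=
  \sum_(j < d) v j = n.

Definition unitv d (j : 'I_d) : {ffun 'I_d -> nat} := [ffun k => (k == j) : nat].

(* A collection of topes indexed by lattice points is modelled as a function
   on all of Z_{>=0}^d; only its values at lattice points matter. *)
Definition tope_family (n d : nat) := {ffun 'I_d -> nat} -> tope n d.

Definition pre_trianguloid n d (T : tope_family n d) : Prop :=
  (forall v, lattice_point n v -> RD (T v) = v) /\
  (forall v v' (j j' : 'I_d), lattice_point n v -> lattice_point n v' ->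
     (* v - e_j = v' - e_j'  (as integer vectors), i.e. v + e_j' = v' + e_j *)
     (forall k, v k + unitv j' k = v' k + unitv j k) ->
     [set i | T v' i == j] \subset [set i | T v i == j]).

Definition extended_tope_arrangement n d (T : tope_family n d) : Prop :=
  (forall v, lattice_point n v -> RD (T v) = v) /\
  (forall v v', lattice_point n v -> lattice_point n v' ->
     compatible (tope_graph (T v)) (tope_graph (T v'))).

From mathcomp Require Import all_boot.
Set Implicit Arguments. Unset Strict Implicit. Unset Printing Implicit Defensive.

(* Two topes A, B are incompatible exactly when they form a conflict: a
   nonempty set S of left vertices on which they differ everywhere with
   A(S) contained in B(S); a minimal conflict carries two distinct perfect
   matchings between S and A(S) = B(S).  For a pre-trianguloid T we induct on
   the set X of left vertices.  If a minimal conflict between T_v and T_w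
   covers X, counting degrees forces v = w.  Otherwise it misses some p, and
   deleting p gives a pre-trianguloid on X \ p whose topes restrict those of T
   (x |-> T_(x + e_c), c being the colour such a tope gives p; the topes
   T_(x + e_k) that colour p by k agree off p), where the conflict survives.
   Conversely, for compatible topes with RD T_v + e_j' = RD T_v' + e_j, a
   vertex coloured j by T_v' but not by T_v would yield a conflict, because
   T_v has no more vertices of any colour other than j than T_v' has. *)

Section Topes.
Variables n d : nat.
Implicit Types (A B : tope n d) (X S : {set 'I_n}).

Definition fiber X A (r : 'I_d) := [set i in X | A i == r].
Definition degree_on X A r := #|fiber X A r|.
Definition disagreement X A B := [set i in X | A i != B i].

Definition conflict_set X A B S :=
  [&& S \subset disagreement X A B, S != set0 & A @: S \subset B @: S].
Definition conflict X A B := exists S, conflict_set X A B S.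

Definition tope_matching A S : graph n d := [set (i, A i) | i in S].

Lemma mem_tope_graph A i j : ((i, j) \in tope_graph A) = (j == A i).
Proof. by apply/imsetP/eqP => [[i' _ [-> ->]] // | ->]; exists i. Qed.

Lemma mem_tope_matching A S i j :
  ((i, j) \in tope_matching A S) = (i \in S) && (j == A i).
Proof.
by apply/imsetP/andP => [[i' i'S [-> ->]] // | [iS /eqP ->]]; exists i.
Qed.

Lemma tope_matching_sub A S : tope_matching A S \subset tope_graph A.
Proof. by apply/subsetP => _ /imsetP[i _ ->]; rewrite mem_tope_graph. Qed.

Lemma tope_matching_perfect A S :
  {in S &, injective A} -> perfect_matching (tope_matching A S) S (A @: S).
Proof.
move=> injA; split; [|split].
- by move=> _ /imsetP[i iS ->] /=; rewrite iS imset_f.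
- move=> i iS; apply/eqP/cards1P; exists (A i); apply/setP => j; rewrite !inE.
  by apply/imsetP/eqP => [[i' _ [-> ->]] // | ->]; exists i.
- move=> _ /imsetP[i iS ->]; apply/eqP/cards1P; exists i; apply/setP => i'.
  rewrite !inE; apply/imsetP/eqP => [[i'' i''S [-> Ai'']] | ->]; last by exists i.
  exact: injA.
Qed.

Lemma perfect_matching_tope_graph A (M : graph n d) I J :
  M \subset tope_graph A -> perfect_matching M I J -> M = tope_matching A I.
Proof.
move=> sMA [sMIJ [degI _]]; apply/setP => -[i j].
have edgeA e : e \in M -> e.2 = A e.1.
  by case: e => i' j' /(subsetP sMA); rewrite mem_tope_graph => /eqP.
apply/idP/imsetP => [eM | [i' i'I [-> ->]]].
  by exists i; [case/andP: (sMIJ _ eM) | rewrite -(edgeA _ eM)].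
have /eqP/cards1P[j' Mi'] := degI _ i'I.
have : j' \in [set j | (i', j) \in M] by rewrite Mi' set11.
by rewrite inE => eM; rewrite -[A i'](edgeA _ eM).
Qed.

Lemma minimal_conflict_set X A B : conflict X A B ->
  exists S, [/\ conflict_set X A B S, A @: S = B @: S,
                {in S &, injective A} & {in S &, injective B}].
Proof.
case=> S0 cS0; case: (arg_minnP (fun S => #|S|) cS0) => S cS minS.
case/and3P: (cS) => sSD nzS sAB.
have inS i : i \in S -> (i \in X) && (A i != B i).
  by move/(subsetP sSD); rewrite inE.
have noconfD1 i : i \in S -> ~~ conflict_set X A B (S :\ i).
  move=> iS; apply: contraTN isT => /minS; rewrite (cardsD1 i S) iS.
  by rewrite add1n ltnn.
have sBA : B @: S \subset A @: S.
  apply/subsetP => _ /imsetP[i iS ->]; apply: contraNT (noconfD1 i iS) => BiA.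
  have /imsetP[i' i'S Ai_Bi'] : A i \in B @: S by rewrite (subsetP sAB) ?imset_f.
  have i'i : i' != i by apply: contraTneq (inS i iS) => i'i; rewrite Ai_Bi' i'i eqxx andbF.
  apply/and3P; split.
  - by apply: subset_trans sSD; apply: subsetDl.
  - by apply/set0Pn; exists i'; rewrite !inE i'i.
  apply/subsetP => _ /imsetP[j /setD1P[ji jS] ->].
  have /imsetP[j' j'S Aj_Bj'] : A j \in B @: S by rewrite (subsetP sAB) ?imset_f.
  have j'i : j' != i by apply: contraNneq BiA => <-; rewrite -Aj_Bj' imset_f.
  by rewrite Aj_Bj' imset_f // !inE j'i.
have eqAB : A @: S = B @: S by apply/eqP; rewrite eqEsubset sAB.
have injB : {in S &, injective B}.
  move=> i j iS jS Bij; apply/eqP; apply: contraNT (noconfD1 i iS) => ij.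
  apply/and3P; split.
  - by apply: subset_trans sSD; apply: subsetDl.
  - by apply/set0Pn; exists j; rewrite !inE eq_sym ij.
  apply/subsetP => _ /imsetP[k /setD1P[_ kS] ->].
  have /imsetP[k' k'S ->] : A k \in B @: S by rewrite -eqAB imset_f.
  have [-> | k'i] := eqVneq k' i; first by rewrite Bij imset_f // !inE eq_sym ij.
  by rewrite imset_f // !inE k'i.
have injA : {in S &, injective A} by apply/imset_injP; rewrite eqAB; apply/imset_injP.
by exists S.
Qed.

Lemma compatible_tope_graphP A B :
  compatible (tope_graph A) (tope_graph B) <-> ~ conflict setT A B.
Proof.
split=> [compAB /minimal_conflict_set[S [/and3P[sSD nzS _] eqAB injA injB]] | noconf].
  have := compAB S (A @: S) _ _ (tope_matching_sub A S) (tope_matching_sub B S)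
            (tope_matching_perfect injA).
  rewrite eqAB => /(_ (tope_matching_perfect injB)) eqM.
  case/set0Pn: nzS => i iS.
  have : (i, A i) \in tope_matching B S by rewrite -eqM imset_f.
  rewrite mem_tope_matching => /andP[_ /eqP ABi].
  by move: (subsetP sSD i iS); rewrite inE ABi eqxx andbF.
move=> I J M1 M2 sM1 sM2 pm1 pm2.
have eM1 := perfect_matching_tope_graph sM1 pm1.
have eM2 := perfect_matching_tope_graph sM2 pm2.
move: pm1 pm2; rewrite eM1 eM2 => -[edgeJ [_ degJ1]] [_ [_ degJ2]].
have [D0 | /set0Pn[i0 i0D]] := eqVneq (disagreement I A B) set0.
  apply: eq_in_imset => i iI; congr (_, _).
  by apply/eqP/negbFE; move: (in_set0 i); rewrite -D0 inE iI.
case: noconf; exists (disagreement I A B); apply/and3P; split.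
- by apply/subsetP => i; rewrite !inE => /andP[_ ->].
- by apply/set0Pn; exists i0.
apply/subsetP => y /imsetP[i]; rewrite inE => /andP[iI ABi] ->.
have AiJ : A i \in J by case/andP: (edgeJ (i, A i) (imset_f _ iI)).
have /eqP/cards1P[i' M2i'] := degJ2 _ AiJ.
have : i' \in [set k | (k, A i) \in tope_matching B I] by rewrite M2i' set11.
rewrite inE mem_tope_matching => /andP[i'I /eqP Bi'].
rewrite Bi' imset_f // inE i'I /=; apply: contraNneq ABi => ABi'.
have /eqP/cards1P[k M1k] := degJ1 _ AiJ.
have M1i k' : k' \in I -> A k' = A i -> k' = k.
  by move=> k'I Ak'; apply/set1P; rewrite -M1k inE mem_tope_matching k'I Ak' eqxx.
have -> : i = i' by rewrite (M1i i) // (M1i i') // ABi'.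
by rewrite ABi'.
Qed.

Lemma image_disagreement X A B i :
  i \in disagreement X A B -> degree_on X A (A i) <= degree_on X B (A i) ->
  A i \in B @: disagreement X A B.
Proof.
move=> iD; apply: contraTT => notBD; rewrite -ltnNge.
move: iD; rewrite inE => /andP[iX ABi].
have sBA : fiber X B (A i) \subset fiber X A (A i) :\ i.
  apply/subsetP => j; rewrite !inE => /andP[jX /eqP Bj].
  have /eqP ABj : A j == B j.
    by apply: contraNT notBD => ABj; rewrite -Bj imset_f // inE jX.
  rewrite jX ABj Bj eqxx !andbT.
  by apply: contraNneq ABi => ji; rewrite -ji ABj.
rewrite /degree_on (cardsD1 i (fiber X A (A i))) !inE iX eqxx add1n ltnS.
exact: subset_leq_card.
Qed.

Lemma fiber_setD1 X A p r : fiber (X :\ p) A r = fiber X A r :\ p.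
Proof. by apply/setP => i; rewrite !inE andbA. Qed.

Lemma fiber_eq_in X A B r : {in X, A =1 B} -> fiber X A r = fiber X B r.
Proof. by move=> eqAB; apply/setP => i; rewrite !inE; case: (boolP (i \in X)) => // /eqAB->. Qed.

Lemma card_preimage_on X A (J : {set 'I_d}) :
  #|[set i in X | A i \in J]| = \sum_(r in J) degree_on X A r.
Proof.
rewrite -sum1_card (partition_big A (mem J)) /=; last by move=> i; rewrite inE => /andP[].
apply: eq_bigr => r rJ; rewrite /degree_on -sum1_card; apply: eq_bigl => i; rewrite !inE.
by case: eqP => [-> | _]; rewrite ?rJ ?andbT ?andbF.
Qed.

Lemma degree_on_inj S A r :
  {in S &, injective A} -> degree_on S A r = (r \in A @: S).
Proof.
move=> injA; case: (boolP (r \in A @: S)) => [/imsetP[i iS ->] | notAr].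
  apply/eqP/cards1P; exists i; apply/setP => j; rewrite !inE.
  by apply/andP/eqP => [[jS /eqP /injA ->] | ->]; rewrite ?iS.
apply/eqP; rewrite cards_eq0; apply/eqP/setP => j; rewrite !inE.
by apply: contraNF notAr => /andP[jS /eqP <-]; rewrite imset_f.
Qed.

End Topes.

Section PreTrianguloidOn.
Variables n d : nat.
Local Notation vec := {ffun 'I_d -> nat}.
Implicit Types (X : {set 'I_n}) (T : tope_family n d) (x v w : vec).

Definition succv x k : vec := [ffun m => x m + (m == k)].

Definition lattice_on X v := \sum_(j < d) v j = #|X|.

Definition pre_trianguloid_on X T :=
  (forall v, lattice_on X v -> forall r, degree_on X (T v) r = v r) /\
  (forall v v' j j', lattice_on X v -> lattice_on X v' ->
     (forall k, v k + unitv j' k = v' k + unitv j k) ->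
     fiber X (T v') j \subset fiber X (T v) j).

Lemma sum_succv x k : \sum_(j < d) succv x k j = (\sum_(j < d) x j).+1.
Proof.
under eq_bigr do rewrite ffunE.
rewrite big_split /= -addn1; congr (_ + _).
by rewrite (bigD1 k) //= eqxx big1 // => j /negbTE->.
Qed.

Section Link.
Variables (X : {set 'I_n}) (T : tope_family n d) (x : vec).
Hypotheses (hT : pre_trianguloid_on X T) (hx : (\sum_(j < d) x j).+1 = #|X|).
Local Notation T_ k := (T (succv x k)).

Lemma lattice_on_succv k : lattice_on X (succv x k).
Proof. by rewrite /lattice_on sum_succv. Qed.

Lemma degree_succv k r : degree_on X (T_ k) r = x r + (r == k).
Proof. by rewrite (proj1 hT _ (lattice_on_succv k)) /succv ffunE. Qed.

Lemma fiber_succv_sub m r : fiber X (T_ m) r \subset fiber X (T_ r) r.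
Proof.
apply: (proj2 hT _ _ r m (lattice_on_succv r) (lattice_on_succv m)) => k.
by rewrite /succv /unitv !ffunE addnAC.
Qed.

Lemma succv_fixed m p : p \in X -> T_ (T_ m p) p = T_ m p.
Proof.
move=> pX; have /subsetP/(_ p) := fiber_succv_sub m (T_ m p).
by rewrite !inE pX eqxx => /(_ isT) /eqP.
Qed.

Lemma card_fiber_succv_diff k r :
  r != k -> #|fiber X (T_ r) r :\: fiber X (T_ k) r| = 1.
Proof.
move=> rk; rewrite cardsDS ?fiber_succv_sub //.
by rewrite -!/(degree_on _ _ _) !degree_succv eqxx (negbTE rk) addn1 addn0 subSnn.
Qed.

Lemma degree_off_fixed k p s :
  p \in X -> T_ k p = k -> degree_on (X :\ p) (T_ k) s = x s.
Proof.
move=> pX Tkp; rewrite /degree_on fiber_setD1.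
have := degree_succv k s; rewrite /degree_on (cardsD1 p) !inE pX Tkp /=.
by rewrite [k == s]eq_sym addnC => /addIn.
Qed.

(* For [r0 \in J], [T_ r0] colours one more vertex in [J] than [T_ k] does,
   yet each fibre difference below is a singleton, so the hypothesis would
   make every such vertex [J]-coloured by [T_ k] as well. *)
Lemma closed_colors_empty k (J : {set 'I_d}) : k \notin J ->
  (forall r, r \in J -> exists2 i0,
     i0 \in fiber X (T_ r) r :\: fiber X (T_ k) r & T_ k i0 \in J) ->
  J = set0.
Proof.
move=> kJ closedJ; apply/eqP/set0Pn => -[r0 r0J].
have sub : [set i in X | T_ r0 i \in J] \subset [set i in X | T_ k i \in J].
  apply/subsetP => i; rewrite !inE => /andP[iX rJ]; rewrite iX /=.
  set r := T_ r0 i in rJ *.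
  have [-> // | Tkir] := eqVneq (T_ k i) r.
  have [i0 i0diff Tki0J] := closedJ r rJ.
  have rk : r != k by apply: contraNneq kJ => <-.
  have idiff : i \in fiber X (T_ r) r :\: fiber X (T_ k) r.
    rewrite !inE iX (negbTE Tkir) /=.
    by have /subsetP/(_ i) := fiber_succv_sub r0 r; rewrite !inE iX eqxx => /(_ isT).
  have /eqP/cards1P[i1 diff1] := card_fiber_succv_diff rk.
  by move: idiff i0diff; rewrite diff1 !inE => /eqP-> /eqP<-.
move: (subset_leq_card sub); rewrite !card_preimage_on.
under eq_bigr => r _ do rewrite degree_succv.
under [X in _ <= X]eq_bigr => r rJ do rewrite degree_succv.
rewrite !big_split /=.
have -> : \sum_(r in J) (r == r0) = 1.
  by rewrite (bigD1 r0) //= eqxx big1 // => r /andP[_ /negbTE->].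
have -> : \sum_(r in J) (r == k) = 0.
  by rewrite big1 // => r rJ; case: eqP rJ kJ => // ->->.
by rewrite addn0 addn1 ltnn.
Qed.

Lemma fixed_succv_agree p k k' :
  p \in X -> T_ k p = k -> T_ k' p = k' -> {in X :\ p, T_ k =1 T_ k'}.
Proof.
move=> pX Tkp Tk'p; set D := disagreement (X :\ p) (T_ k) (T_ k').
suff D0 : D = set0.
  by move=> i iXp; apply/eqP/negbFE; move: (in_set0 i); rewrite -D0 inE iXp.
have kD : k \notin T_ k' @: D.
  apply/imsetP => -[i]; rewrite !inE => /andP[/andP[_ iX] TTi] kT.
  have /subsetP/(_ i) := fiber_succv_sub k' k.
  by rewrite !inE iX -kT eqxx => /(_ isT) /eqP Tki; rewrite Tki kT eqxx in TTi.
have sTT : T_ k @: D \subset T_ k' @: D.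
  apply/subsetP => _ /imsetP[i iD ->]; apply: image_disagreement => //.
  by rewrite !degree_off_fixed.
apply/eqP; rewrite -(imset_eq0 (T_ k')); apply/eqP.
apply: (closed_colors_empty kD) => _ /imsetP[i0 i0D ->]; exists i0.
  move: i0D; rewrite !inE => /andP[/andP[_ i0X] TTi0]; rewrite i0X (negbTE TTi0) /=.
  by have /subsetP/(_ i0) := fiber_succv_sub k' (T_ k' i0); rewrite !inE i0X eqxx => /(_ isT).
by rewrite (subsetP sTT) ?imset_f.
Qed.

End Link.

End PreTrianguloidOn.

Section Deletion.
Variables n d : nat.
Local Notation vec := {ffun 'I_d -> nat}.
Implicit Types (X : {set 'I_n}) (T : tope_family n d) (x u v w : vec).

(* Forgetting the left vertex [p]: at [x] take the tope [T (x + e_c)], where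
   [c] is the colour that [T (x + e_k0)] gives to [p]; off [p] the choice of
   [k0] is irrelevant by [fixed_succv_agree]. *)
Definition delete_left T (p : 'I_n) (k0 : 'I_d) : tope_family n d :=
  fun x => T (succv x (T (succv x k0) p)).

Lemma lattice_on_setD1 X p x :
  p \in X -> lattice_on (X :\ p) x <-> (\sum_(j < d) x j).+1 = #|X|.
Proof. by move=> pX; rewrite /lattice_on (cardsD1 p X) pX add1n; split=> [-> | []]. Qed.

Lemma delete_left_agree X T p k0 x c :
  pre_trianguloid_on X T -> p \in X -> lattice_on (X :\ p) x ->
  T (succv x c) p = c -> {in X :\ p, delete_left T p k0 x =1 T (succv x c)}.
Proof.
move=> hT pX /(lattice_on_setD1 _ pX) hx Tcp.
exact: (fixed_succv_agree hT hx pX (succv_fixed hT hx k0 pX) Tcp).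
Qed.

Lemma pre_trianguloid_on_delete X T p k0 :
  pre_trianguloid_on X T -> p \in X -> pre_trianguloid_on (X :\ p) (delete_left T p k0).
Proof.
move=> hT pX; have hx x := (lattice_on_setD1 x pX).1.
split=> [x lx r | x x' j j' lx lx' xx'].
  have Tcp := succv_fixed hT (hx _ lx) k0 pX.
  rewrite /degree_on (fiber_eq_in _ (delete_left_agree k0 hT pX lx Tcp)).
  exact: (degree_off_fixed hT (hx _ lx)).
have xj'_x'j : succv x j' = succv x' j.
  by apply/ffunP => m; have := xx' m; rewrite /succv /unitv !ffunE.
set c := T (succv x j') p.
have Tcp : T (succv x c) p = c := succv_fixed hT (hx _ lx) j' pX.
have Tcp' : T (succv x' c) p = c by rewrite /c xj'_x'j; exact: (succv_fixed hT (hx _ lx') j pX).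
rewrite (fiber_eq_in _ (delete_left_agree k0 hT pX lx Tcp)).
rewrite (fiber_eq_in _ (delete_left_agree k0 hT pX lx' Tcp')) !fiber_setD1 setSD //.
apply: (proj2 hT _ _ j j' (lattice_on_succv (hx _ lx) c) (lattice_on_succv (hx _ lx') c)) => m.
by have := xx' m; rewrite /succv /unitv !ffunE addnAC => ->; rewrite addnAC.
Qed.

Lemma delete_left_onto X T p k0 u :
  pre_trianguloid_on X T -> p \in X -> lattice_on X u ->
  exists2 x, lattice_on (X :\ p) x & {in X :\ p, delete_left T p k0 x =1 T u}.
Proof.
move=> hT pX lu; pose x : vec := [ffun m => u m - (m == T u p)].
have u_pos : 0 < u (T u p).
  by rewrite -(proj1 hT u lu) card_gt0; apply/set0Pn; exists p; rewrite !inE pX eqxx.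
have xu : succv x (T u p) = u.
  by apply/ffunP => m; rewrite !ffunE; case: eqP => [-> | _]; rewrite ?subn0 ?addn0 ?subnK.
have lx : lattice_on (X :\ p) x.
  by apply/(lattice_on_setD1 _ pX); rewrite -(sum_succv x (T u p)) xu.
exists x => // i iXp; rewrite -[in RHS]xu.
by apply: (delete_left_agree k0 hT pX lx) => //; rewrite xu.
Qed.

End Deletion.

Lemma pre_trianguloid_on_no_conflict n d (X : {set 'I_n}) (T : tope_family n d) v w :
  pre_trianguloid_on X T -> lattice_on X v -> lattice_on X w -> ~ conflict X (T v) (T w).
Proof.
have [N] := ubnP #|X|; elim: N X T v w => // N IH X T v w /ltnSE leXN hT lv lw.
case/minimal_conflict_set => S [/and3P[sSD nzS _] eqTS injv injw].
have sSX : S \subset X by apply: subset_trans sSD _; apply/subsetP => i /setIdP[].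
have [sXS | /subsetPn[p pX pS]] := boolP (X \subset S).
  have eqSX : S = X by apply/eqP; rewrite eqEsubset sSX.
  have eqvw : v = w.
    apply/ffunP => r; rewrite -(proj1 hT v lv r) -(proj1 hT w lw r) -eqSX.
    by rewrite !degree_on_inj // eqTS.
  by case/set0Pn: nzS => i /(subsetP sSD); rewrite inE eqvw eqxx andbF.
have sSXp : S \subset X :\ p.
  by apply/subsetP => i iS; rewrite !inE (subsetP sSX) // andbT; apply: contraNneq pS => <-.
have [xv lxv eqv] := delete_left_onto (T v p) hT pX lv.
have [xw lxw eqw] := delete_left_onto (T v p) hT pX lw.
apply: (IH (X :\ p) _ xv xw _ (pre_trianguloid_on_delete (T v p) hT pX) lxv lxw).
  by move: leXN; rewrite (cardsD1 p X) pX.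
have {}eqv : {in S, delete_left T p (T v p) xv =1 T v} by move=> i /(subsetP sSXp)/eqv.
have {}eqw : {in S, delete_left T p (T v p) xw =1 T w} by move=> i /(subsetP sSXp)/eqw.
exists S; apply/and3P; split=> //; last by rewrite (eq_in_imset eqv) (eq_in_imset eqw) eqTS.
apply/subsetP => i iS; move/(subsetP sSD): (iS); rewrite !inE => /andP[_ Tvwi].
by rewrite -in_setD1 (subsetP sSXp) // eqv // eqw.
Qed.

Lemma lattice_on_setT n d (v : {ffun 'I_d -> nat}) :
  lattice_on [set: 'I_n] v = lattice_point n v.
Proof. by rewrite /lattice_on cardsT card_ord. Qed.

Lemma fiber_setT n d (A : tope n d) r : fiber [set: 'I_n] A r = [set i | A i == r].
Proof. by apply/setP => i; rewrite !inE. Qed.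

Lemma degree_on_setT n d (A : tope n d) r : degree_on [set: 'I_n] A r = RD A r.
Proof. by rewrite /degree_on fiber_setT ffunE. Qed.

Lemma pre_trianguloidE n d (T : tope_family n d) :
  pre_trianguloid T <-> pre_trianguloid_on [set: 'I_n] T.
Proof.
rewrite /pre_trianguloid /pre_trianguloid_on.
split=> -[RDT subT]; split=> [v | v v' j j']; rewrite ?lattice_on_setT ?fiber_setT.
- by move=> lv r; rewrite degree_on_setT RDT.
- exact: subT.
- by move=> lv; apply/ffunP => r; rewrite -degree_on_setT RDT ?lattice_on_setT.
- by move: (subT v v' j j'); rewrite !lattice_on_setT !fiber_setT.
Qed.

Lemma compatible_fiber_sub n d (A B : tope n d) j j' :
  compatible (tope_graph A) (tope_graph B) ->
  (forall k, RD A k + unitv j' k = RD B k + unitv j k) ->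
  [set i | B i == j] \subset [set i | A i == j].
Proof.
move=> /compatible_tope_graphP noconf degAB; rewrite -!(fiber_setT _ j).
apply/subsetP => i0 i0B; apply/negPn/negP => i0A; apply: noconf.
have Bi0 : B i0 = j by move: i0B; rewrite !inE => /eqP.
have i0D : i0 \in disagreement setT A B by move: i0A; rewrite !inE Bi0.
exists (disagreement setT A B); apply/and3P; split=> //; first by apply/set0Pn; exists i0.
apply/subsetP => _ /imsetP[i iD ->].
have [-> | Aij] := eqVneq (A i) j; first by rewrite -Bi0 imset_f.
apply: image_disagreement => //; rewrite !degree_on_setT.
by have := degAB (A i); rewrite /unitv !ffunE (negbTE Aij) addn0 => <-; apply: leq_addr.
Qed.

Theorem mainTheorem7 (n d : nat) (hn : 0 < n) (hd : 0 < d) :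
  (forall T : tope_family n d, pre_trianguloid T ->
     forall v v', lattice_point n v -> lattice_point n v' ->
       compatible (tope_graph (T v)) (tope_graph (T v'))) /\
  (forall T : tope_family n d,
     pre_trianguloid T <-> extended_tope_arrangement T).
Proof.
have compatT (T : tope_family n d) : pre_trianguloid T ->
    forall v v', lattice_point n v -> lattice_point n v' ->
    compatible (tope_graph (T v)) (tope_graph (T v')).
  move=> /pre_trianguloidE hT v v'; rewrite -!lattice_on_setT => lv lv'.
  exact/compatible_tope_graphP/(pre_trianguloid_on_no_conflict hT lv lv').
split=> // T; split=> [hT | [RDT compT]]; first by split; [apply: hT.1 | apply: compatT].
split=> // v v' j j' lv lv' vv'; apply: compatible_fiber_sub (compT v v' lv lv') _.
by move=> k; rewrite !RDT.
Qed.
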